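(* Let $k$ be a perfect field, $B=k[s]/(s^n)$, and $A$ a $k$-subalgebra of $B$ with maximal ideal $M$ (so $A$ is local with residue field $k$). Let $m=\dim_k(M/M^2)$ and let $e\ge1$ be the largest integer with $M\subseteq s^eB$. If $e<\binom m2$, then the kernel of $\Omega_{A/k}\to\Omega_{B/k}$ is nonzero. *)

From HB Require Import structures.
From mathcomp Require Import all_boot all_order all_algebra.
Set Implicit Arguments. Unset Strict Implicit. Unset Printing Implicit Defensive.
Import GRing.Theory.
Local Open Scope ring_scope.

Definition perfect_field (k : fieldType) : Prop :=
  forall p : nat, p \in [pchar k] -> forall x : k, exists y : k, y ^+ p = x.

Section TruncPoly.
Variables (k : fieldType) (n : nat).

(* B = k[s]/(s^n) is modelled as the k-vector space 'rV[k]_n of coefficient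
   rows: u represents sum_{i<n} u_i s^i. *)
Definition bmul (u v : 'rV[k]_n) : 'rV[k]_n :=
  \row_(i < n) \sum_(j < n) \sum_(l < n | (j + l)%N == (i : nat)) u 0 j * v 0 l.

Definition bone : 'rV[k]_n := \row_(i < n) ((i : nat) == 0%N)%:R.

(* s^e in B (zero when e >= n) *)
Definition spow (e : nat) : 'rV[k]_n := \row_(i < n) ((i : nat) == e)%:R.

Definition in_spowB (e : nat) (u : 'rV[k]_n) : Prop :=
  exists b : 'rV[k]_n, u = bmul (spow e) b.

Definition maxB : {vspace 'rV[k]_n} := <<[seq spow i | i <- iota 1 n.-1]>>%VS.

Definition is_subalgebra (A : {vspace 'rV[k]_n}) : Prop :=
  bone \in A /\ forall x y, x \in A -> y \in A -> bmul x y \in A.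

Definition maxA (A : {vspace 'rV[k]_n}) : {vspace 'rV[k]_n} := (A :&: maxB)%VS.

End TruncPoly.

(* k-span of all products f x y with x in X, y in Y (by bilinearity it suffices
   to take products of basis vectors). *)
Definition prodspace (k : fieldType) (U V W : vectType k) (f : U -> V -> W)
  (X : {vspace U}) (Y : {vspace V}) : {vspace W} :=
  <<[seq f x y | x <- vbasis X, y <- vbasis Y]>>%VS.

Section Kahler.
Variables (k : fieldType) (n : nat).

Definition maxA2 (A : {vspace 'rV[k]_n}) : {vspace 'rV[k]_n} :=
  prodspace (@bmul k n) (maxA A) (maxA A).
Definition cotdim (A : {vspace 'rV[k]_n}) : nat :=
  (\dim (maxA A) - \dim (maxA2 A))%N.

(* B ⊗_k B = k[s,t]/(s^n,t^n), as n x n coefficient matrices: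
   P represents sum P_ij s^i t^j. *)
Definition tens (a b : 'rV[k]_n) : 'M[k]_(n, n) := \matrix_(i, j) (a 0 i * b 0 j).

Definition tmul (P Q : 'M[k]_(n, n)) : 'M[k]_(n, n) :=
  \matrix_(i, j) \sum_(i1 < n) \sum_(i2 < n | (i1 + i2)%N == (i : nat))
                 \sum_(j1 < n) \sum_(j2 < n | (j1 + j2)%N == (j : nat))
                    P i1 j1 * Q i2 j2.

Definition tmult (P : 'M[k]_(n, n)) : 'rV[k]_n :=
  \row_(l < n) \sum_(i < n) \sum_(j < n | (i + j)%N == (l : nat)) P i j.

(* A ⊗_k A, realised inside B ⊗_k B (k is a field, so A ⊗ A -> B ⊗ B is injective) *)
Definition tensA (A : {vspace 'rV[k]_n}) : {vspace 'M[k]_(n, n)} :=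
  prodspace tens A A.

(* I_A = ker (A ⊗ A -> A) and its square; Omega_{A/k} = I_A / I_A^2 *)
Definition diagI (A : {vspace 'rV[k]_n}) : {vspace 'M[k]_(n, n)} :=
  (tensA A :&: lker (linfun tmult))%VS.
Definition diagI2 (A : {vspace 'rV[k]_n}) : {vspace 'M[k]_(n, n)} :=
  prodspace tmul (diagI A) (diagI A).

(* The natural map Omega_{A/k} = I_A/I_A^2 -> Omega_{B/k} = I_B/I_B^2,
   x + I_A^2 |-> x + I_B^2, has nonzero kernel. *)
Definition Omega_map_ker_nonzero (A : {vspace 'rV[k]_n}) : Prop :=
  exists x : 'M[k]_(n, n),
    [/\ x \in diagI A, x \notin diagI2 A & x \in diagI2 (fullv : {vspace 'rV[k]_n})].

End Kahler.

From HB Require Import structures.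
From mathcomp Require Import all_boot all_order all_algebra.
From Stdlib Require Import Classical.
From mathcomp Require Import zify ring.
Set Implicit Arguments. Unset Strict Implicit. Unset Printing Implicit Defensive.
Import GRing.Theory.
Local Open Scope ring_scope.

(* Suppose Omega_A -> Omega_B is injective.  Pick t in M of s-adic order
   exactly e and compare multiplication by t on the finite-dimensional spaces
   Omega_A = I_A/I_A^2 and Omega_B = I_B/I_B^2.  Kernel and cokernel of an
   endomorphism have the same dimension and the t-torsion of Omega_A embeds in
   that of Omega_B, so dim Omega_A/t Omega_A <= dim Omega_B/t Omega_B.  The
   right side is at most e: Omega_B is generated by the x dy, and since
   B = span(1, s, ..., s^(e-1)) + tB, the x ds with x = s^l, l < e, suffice
   modulo t Omega_B + I_B^2.  For the left side let a_1, ..., a_r span a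
   complement of M^2 + kt in M, so r >= m - 1, and let lambda_i be the dual
   point derivations A -> k.  The functionals on A (x) A built from lambda_i
   and the augmentation vanish on t I_A + I_A^2 and are dual to the r + C(r,2)
   classes d a_i, a_i d a_j (i < j), so dim Omega_A/t Omega_A >= C(r+1,2)
   >= C(m,2) > e. *)

(** * The truncated polynomial ring B = k[s]/(s^n) *)

Section TruncatedPolynomials.
Variable k : fieldType.

Lemma sum_conv (n i : nat) (F : nat -> nat -> k) : (i < n)%N ->
  \sum_(j < n) \sum_(l < n | (j + l == i)%N) F j l = \sum_(j < i.+1) F j (i - j)%N.
Proof.
move=> lt_in.
rewrite (big_ord_widen n (fun j => F j (i - j)%N) lt_in) [RHS]big_mkcond /=.
apply: eq_bigr => j _.
case: (leqP j i) => hji.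
  rewrite ltnS hji.
  have hlt : (i - j < n)%N by lia.
  rewrite (big_pred1 (Ordinal hlt)) //= => l.
  apply/eqP/eqP => h; [by apply: val_inj => /=; lia | by rewrite h /=; lia].
rewrite ltnS leqNgt hji /= big_pred0 // => l; apply/eqP; lia.
Qed.

Variable n : nat.
Implicit Types u v w : 'rV[k]_n.

Definition bcoef u (i : nat) : k := \sum_(j < n | (j : nat) == i) u 0 j.

Lemma bcoef_ord u (j : 'I_n) : bcoef u j = u 0 j.
Proof. by rewrite /bcoef (big_pred1 j) // => l; rewrite -val_eqE. Qed.

Lemma bcoef_out u i : (n <= i)%N -> bcoef u i = 0.
Proof. move=> h; rewrite /bcoef big_pred0 // => l; apply/eqP; have := ltn_ord l; lia. Qed.

Lemma bcoef_lin a u v i : bcoef (a *: u + v) i = a * bcoef u i + bcoef v i.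
Proof.
rewrite /bcoef big_distrr -big_split /=; apply: eq_bigr => j _; by rewrite !mxE.
Qed.

Lemma bcoefP u v : (forall i, bcoef u i = bcoef v i) -> u = v.
Proof. by move=> h; apply/rowP => j; rewrite -!bcoef_ord h. Qed.

Definition bpoly u : {poly k} := \poly_(i < n) bcoef u i.
Definition btrunc (p : {poly k}) : 'rV[k]_n := \row_(i < n) p`_i.

Lemma coef_bpoly u i : (bpoly u)`_i = bcoef u i.
Proof. rewrite coef_poly; case: ltnP => // h; by rewrite bcoef_out. Qed.

Lemma bcoef_btrunc (p : {poly k}) i : bcoef (btrunc p) i = if (i < n)%N then p`_i else 0.
Proof.
case: ltnP => h; last by rewrite bcoef_out.
by rewrite -[i]/(nat_of_ord (Ordinal h)) bcoef_ord mxE.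
Qed.

Lemma bpolyK u : btrunc (bpoly u) = u.
Proof.
apply: bcoefP => i; rewrite bcoef_btrunc coef_bpoly.
by case: ltnP => // h; rewrite bcoef_out.
Qed.

Lemma bmulE u v : bmul u v = btrunc (bpoly u * bpoly v).
Proof.
apply/rowP => i; rewrite !mxE coefM.
transitivity (\sum_(j < n) \sum_(l < n | (j + l == i)%N) bcoef u j * bcoef v l).
  by apply: eq_bigr => j _; apply: eq_bigr => l _; rewrite !bcoef_ord.
rewrite (sum_conv (fun j l => bcoef u j * bcoef v l)) //.
by apply: eq_bigr => j _; rewrite !coef_bpoly.
Qed.

Lemma btrunc_mul_congrl (p p' q : {poly k}) : (forall j, (j < n)%N -> p`_j = p'`_j) ->
  btrunc (p * q) = btrunc (p' * q).
Proof.
move=> h; apply/rowP => i; rewrite !mxE !coefM; apply: eq_bigr => j _.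
rewrite h //; have := ltn_ord j; have := ltn_ord i; lia.
Qed.

Lemma btrunc_mul_congrr (p q q' : {poly k}) : (forall j, (j < n)%N -> q`_j = q'`_j) ->
  btrunc (p * q) = btrunc (p * q').
Proof. by move=> h; rewrite mulrC (btrunc_mul_congrl _ h) mulrC. Qed.

Lemma coef_bpoly_btrunc (p : {poly k}) j : (j < n)%N -> (bpoly (btrunc p))`_j = p`_j.
Proof. by move=> h; rewrite coef_bpoly bcoef_btrunc h. Qed.

Lemma bmulC u v : bmul u v = bmul v u.
Proof. by rewrite !bmulE mulrC. Qed.

Lemma bmulA u v w : bmul u (bmul v w) = bmul (bmul u v) w.
Proof.
rewrite ![bmul u _]bmulC !bmulE.
rewrite (btrunc_mul_congrl _ (coef_bpoly_btrunc (bpoly v * bpoly w))).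
rewrite (btrunc_mul_congrl _ (coef_bpoly_btrunc (bpoly v * bpoly u))).
by rewrite -mulrA [bpoly w * _]mulrC mulrA.
Qed.

Lemma bcoef_bone i : (i < n)%N -> bcoef (bone k n) i = (1 : {poly k})`_i.
Proof.
move=> h.
by rewrite -[i]/(nat_of_ord (Ordinal h)) bcoef_ord mxE coef1.
Qed.

Lemma bcoef_spow d i : (i < n)%N -> bcoef (spow k n d) i = ('X^d : {poly k})`_i.
Proof.
move=> h.
by rewrite -[i]/(nat_of_ord (Ordinal h)) bcoef_ord mxE coefXn.
Qed.

Lemma bmul1l u : bmul (bone k n) u = u.
Proof.
rewrite bmulE (btrunc_mul_congrl (p' := 1)) ?mul1r ?bpolyK // => j hj.
by rewrite coef_bpoly bcoef_bone.
Qed.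

Lemma bmul1r u : bmul u (bone k n) = u.
Proof. by rewrite bmulC bmul1l. Qed.

Lemma bmul_spowl d u : bmul (spow k n d) u = btrunc ('X^d * bpoly u).
Proof. rewrite bmulE; apply: btrunc_mul_congrl => j hj; by rewrite coef_bpoly bcoef_spow. Qed.

Lemma spowD a b : bmul (spow k n a) (spow k n b) = spow k n (a + b).
Proof.
rewrite bmul_spowl (@btrunc_mul_congrr _ _ 'X^b); last first.
  by move=> j hj; rewrite coef_bpoly bcoef_spow.
apply: bcoefP => i; rewrite bcoef_btrunc -exprD.
case: ltnP => h; first by rewrite bcoef_spow.
by rewrite bcoef_out.
Qed.

Lemma bpoly_lin a u v : bpoly (a *: u + v) = a *: bpoly u + bpoly v.
Proof. apply/polyP => i; by rewrite coefD coefZ !coef_bpoly bcoef_lin. Qed.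

Lemma btrunc_lin a (p q : {poly k}) : btrunc (a *: p + q) = a *: btrunc p + btrunc q.
Proof. apply/rowP => i; by rewrite !mxE coefD coefZ. Qed.

Lemma bmul_linl a u v w : bmul (a *: u + v) w = a *: bmul u w + bmul v w.
Proof. by rewrite !bmulE bpoly_lin mulrDl -scalerAl btrunc_lin. Qed.

Lemma bmul_linr a u v w : bmul w (a *: u + v) = a *: bmul w u + bmul w v.
Proof. by rewrite ![bmul w _]bmulC bmul_linl. Qed.

Lemma bcoef_bmul u v i : bcoef (bmul u v) i = if (i < n)%N then (bpoly u * bpoly v)`_i else 0.
Proof. by rewrite bmulE bcoef_btrunc. Qed.

Lemma in_spowBP d u : in_spowB d u <-> (forall i, (i < d)%N -> bcoef u i = 0).
Proof.
split.
  case=> b ->{u} i hi; rewrite bmul_spowl bcoef_btrunc; case: ltnP => // _.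
  by rewrite coefXnM hi.
move=> h.
exists (btrunc (\poly_(j < n) bcoef u (j + d))).
rewrite bmul_spowl (@btrunc_mul_congrr _ _ (\poly_(j < n) bcoef u (j + d))); last first.
  by move=> j hj; rewrite coef_bpoly_btrunc.
apply: bcoefP => i; rewrite bcoef_btrunc; case: ltnP => hi; last by rewrite bcoef_out.
rewrite coefXnM; case: ltnP => hid; first by rewrite h.
rewrite coef_poly; have -> : (i - d + d = i)%N by lia.
by case: ltnP => // ?; lia.
Qed.

Lemma bcoef0 i : bcoef 0 i = 0.
Proof. by rewrite /bcoef big1 // => j _; rewrite mxE. Qed.

Lemma bcoefD u v i : bcoef (u + v) i = bcoef u i + bcoef v i.
Proof. by have := bcoef_lin 1 u v i; rewrite scale1r mul1r. Qed.

Lemma bcoefZ a u i : bcoef (a *: u) i = a * bcoef u i.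
Proof. by rewrite -[_ *: _]addr0 bcoef_lin bcoef0 addr0. Qed.

Lemma bcoef_spow_lt d i : (i < n)%N -> bcoef (spow k n d) i = (i == d)%:R.
Proof. by move=> h; rewrite bcoef_spow // coefXn. Qed.

Lemma bmul0l u : bmul 0 u = 0.
Proof. by have := bmul_linl (-1) 0 0 u; rewrite scaler0 addr0 scaleN1r addNr. Qed.

Lemma bmul0r u : bmul u 0 = 0.
Proof. by rewrite bmulC bmul0l. Qed.

End TruncatedPolynomials.

Ltac lin_step := rewrite big_distrr -big_split /=; apply: eq_bigr => ? _.

(** * The tensor square B (x) B *)

Section TensorSquare.
Variable k : fieldType.
Variable n : nat.
Notation W := 'M[k]_(n, n).
Implicit Types P Q : W.

Lemma tmul_linl a P P' Q : tmul (a *: P + P') Q = a *: tmul P Q + tmul P' Q.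
Proof.
apply/matrixP => i j; rewrite !mxE; do 4 lin_step; rewrite !mxE; ring.
Qed.

Lemma tmult_lin : linear (@tmult k n).
Proof.
move=> a P Q; apply/rowP => l; rewrite !mxE; do 2 lin_step; by rewrite !mxE.
Qed.

Lemma tmul_tens (a b c d : 'rV[k]_n) :
  tmul (tens a b) (tens c d) = tens (bmul a c) (bmul b d).
Proof.
apply/matrixP => i j; rewrite !mxE big_distrl /=; apply: eq_bigr => i1 _.
rewrite big_distrl /=; apply: eq_bigr => i2 _.
rewrite big_distrr /=; apply: eq_bigr => j1 _.
rewrite big_distrr /=; apply: eq_bigr => j2 _.
rewrite !mxE; ring.
Qed.

Lemma tmult_tens (a b : 'rV[k]_n) : tmult (tens a b) = bmul a b.
Proof.
apply/rowP => l; rewrite !mxE; apply: eq_bigr => i _; apply: eq_bigr => j _.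
by rewrite !mxE.
Qed.

Lemma tens_linl c (a a' b : 'rV[k]_n) : tens (c *: a + a') b = c *: tens a b + tens a' b.
Proof. apply/matrixP => i j; rewrite !mxE; ring. Qed.

Lemma tens_linr c (a b b' : 'rV[k]_n) : tens a (c *: b + b') = c *: tens a b + tens a b'.
Proof. apply/matrixP => i j; rewrite !mxE; ring. Qed.

(* B (x) B = k[s,t]/(s^n,t^n); as for B, products are computed in k[s][t]. *)
Definition tcoef P (i j : nat) : k :=
  \sum_(a < n | (a : nat) == i) \sum_(b < n | (b : nat) == j) P a b.

Lemma tcoef_ord P (a b : 'I_n) : tcoef P a b = P a b.
Proof.
have e1 : forall c l : 'I_n, ((l:nat) == c) = (l == c) by [].
by rewrite /tcoef (big_pred1 a (e1 a)) (big_pred1 b (e1 b)).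
Qed.

Lemma tcoef_out P i j : (n <= i)%N || (n <= j)%N -> tcoef P i j = 0.
Proof.
case/orP => h; rewrite /tcoef.
  by rewrite big_pred0 // => l; apply/eqP; have := ltn_ord l; lia.
rewrite big1 // => a _; rewrite big_pred0 // => l; apply/eqP; have := ltn_ord l; lia.
Qed.

Definition tpoly P : {poly {poly k}} := \poly_(i < n) \poly_(j < n) tcoef P i j.
Definition ttrunc (p : {poly {poly k}}) : W := \matrix_(i < n, j < n) (p`_i)`_j.

Lemma coef_tpoly P i j : ((tpoly P)`_i)`_j = tcoef P i j.
Proof.
rewrite coef_poly; case: ltnP => hi; last by rewrite coef0 tcoef_out ?hi.
rewrite coef_poly; case: ltnP => hj //; by rewrite tcoef_out ?hj ?orbT.
Qed.

Lemma tmulE P Q : tmul P Q = ttrunc (tpoly P * tpoly Q).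
Proof.
apply/matrixP => i j; rewrite !mxE coefM coef_sum.
transitivity (\sum_(i1 < n) \sum_(i2 < n | (i1 + i2 == i)%N)
   \sum_(j1 < n) \sum_(j2 < n | (j1 + j2 == j)%N) tcoef P i1 j1 * tcoef Q i2 j2).
  by do 4 (apply: eq_bigr => ? _); rewrite !tcoef_ord.
transitivity (\sum_(i1 < n) \sum_(i2 < n | (i1 + i2 == i)%N)
   \sum_(j1 < j.+1) tcoef P i1 j1 * tcoef Q i2 (j - j1)%N).
  do 2 (apply: eq_bigr => ? _).
  exact: (sum_conv (fun a b => tcoef P _ a * tcoef Q _ b) (ltn_ord j)).
rewrite (sum_conv (fun a b => \sum_(j1 < j.+1) tcoef P a j1 * tcoef Q b (j - j1)%N)
  (ltn_ord i)).
apply: eq_bigr => i1 _; rewrite coefM; apply: eq_bigr => j1 _; by rewrite !coef_tpoly.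
Qed.

Lemma ttrunc_mul_congrl (p p' q : {poly {poly k}}) :
  (forall a b, (a < n)%N -> (b < n)%N -> (p`_a)`_b = (p'`_a)`_b) ->
  ttrunc (p * q) = ttrunc (p' * q).
Proof.
move=> h; apply/matrixP => i j; rewrite !mxE !coefM !coef_sum; apply: eq_bigr => a _.
rewrite !coefM; apply: eq_bigr => b _; rewrite h //.
  have := ltn_ord a; have := ltn_ord i; lia.
have := ltn_ord b; have := ltn_ord j; lia.
Qed.

Lemma coef_tpoly_ttrunc p a b : (a < n)%N -> (b < n)%N ->
  ((tpoly (ttrunc p))`_a)`_b = (p`_a)`_b.
Proof.
move=> ha hb; rewrite coef_tpoly -[a]/(nat_of_ord (Ordinal ha)) -[b]/(nat_of_ord (Ordinal hb)).
by rewrite tcoef_ord mxE.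
Qed.

Lemma tmulC P Q : tmul P Q = tmul Q P.
Proof. by rewrite !tmulE mulrC. Qed.

Lemma tmulA P Q R : tmul P (tmul Q R) = tmul (tmul P Q) R.
Proof.
rewrite ![tmul P _]tmulC !tmulE.
rewrite (ttrunc_mul_congrl _ (coef_tpoly_ttrunc (tpoly Q * tpoly R))).
rewrite (ttrunc_mul_congrl _ (coef_tpoly_ttrunc (tpoly Q * tpoly P))).
by rewrite -mulrA [tpoly R * _]mulrC mulrA.
Qed.

Lemma tmul_linr a P P' Q : tmul Q (a *: P + P') = a *: tmul Q P + tmul Q P'.
Proof. by rewrite ![tmul Q _]tmulC tmul_linl. Qed.

Lemma tmul_lin Q : linear (tmul Q).
Proof. move=> a P P'; exact: tmul_linr. Qed.

Lemma tmulBl (P P' Q : W) : tmul (P - P') Q = tmul P Q - tmul P' Q.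
Proof.
have -> : P - P' = (-1) *: P' + P by rewrite scaleN1r addrC.
by rewrite tmul_linl scaleN1r addrC.
Qed.

Lemma tmulBr (P P' Q : W) : tmul Q (P - P') = tmul Q P - tmul Q P'.
Proof. by rewrite ![tmul Q _]tmulC tmulBl. Qed.

Lemma tens0l (y : 'rV[k]_n) : tens 0 y = 0.
Proof. by apply/matrixP => i j; rewrite !mxE mul0r. Qed.

End TensorSquare.

HB.instance Definition _ (k : fieldType) (n : nat) :=
  GRing.isLinear.Build k 'M[k]_(n, n) 'rV[k]_n _ (@tmult k n) (@tmult_lin k n).

HB.instance Definition _ (k : fieldType) (n : nat) (Q : 'M[k]_(n, n)) :=
  GRing.isLinear.Build k 'M[k]_(n, n) 'M[k]_(n, n) _ (@tmul k n Q) (@tmul_lin k n Q).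

(** * Linear algebra *)

Section LinearAlgebra.
Variable k : fieldType.

Lemma span_ind (V : vectType k) (X : seq V) (Pr : V -> Prop) :
  Pr 0 -> (forall a u v, Pr u -> Pr v -> Pr (a *: u + v)) ->
  (forall x, x \in X -> Pr x) -> forall v, v \in <<X>>%VS -> Pr v.
Proof.
move=> P0 Pc PX v Hv.
have -> := @coord_span _ _ _ (in_tuple X) v Hv.
apply: (big_ind Pr) => //.
  by move=> x y Px Py; have := Pc 1 x y Px Py; rewrite scale1r.
move=> i _; have := Pc (coord (in_tuple X) i v) _ 0 (PX _ (mem_nth 0 (ltn_ord i))) P0.
by rewrite addr0.
Qed.

Lemma prodspace_ind (U V Wt : vectType k) (f : U -> V -> Wt) (X : {vspace U})
  (Y : {vspace V}) (Pr : Wt -> Prop) :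
  Pr 0 -> (forall a u v, Pr u -> Pr v -> Pr (a *: u + v)) ->
  (forall x y, x \in X -> y \in Y -> Pr (f x y)) ->
  forall z, z \in prodspace f X Y -> Pr z.
Proof.
move=> P0 Pc Pf; apply: span_ind => // z /allpairsP [[x y] /= [hx hy ->]].
by apply: Pf; apply: vbasis_mem.
Qed.

Lemma prodspace_mem (U V Wt : vectType k) (f : U -> V -> Wt) (X : {vspace U})
  (Y : {vspace V}) x y :
  (forall a u u' v, f (a *: u + u') v = a *: f u v + f u' v) ->
  (forall a u v v', f u (a *: v + v') = a *: f u v + f u v') ->
  x \in X -> y \in Y -> f x y \in prodspace f X Y.
Proof.
move=> hl hr hx hy.
have f0l : forall v, f 0 v = 0.
  by move=> v; have := hl (-1) 0 0 v; rewrite scaler0 addr0 scaleN1r addNr.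
have f0r : forall u, f u 0 = 0.
  by move=> u; have := hr (-1) u 0 0; rewrite scaler0 addr0 scaleN1r addNr.
have hx' : x \in <<vbasis X>>%VS by rewrite (span_basis (vbasisP X)).
have hy' : y \in <<vbasis Y>>%VS by rewrite (span_basis (vbasisP Y)).
clear hx hy; move: x hx'; apply: span_ind.
- by rewrite f0l mem0v.
- by move=> a u u' hu hu'; rewrite hl memvD ?memvZ.
move=> x hx; move: y hy'; apply: span_ind.
- by rewrite f0r mem0v.
- by move=> a u u' hu hu'; rewrite hr memvD ?memvZ.
move=> y hy; apply: memv_span; apply/allpairsP; by exists (x, y).
Qed.

Lemma dim_add_dual_family (V : vectType k) (I : finType) (P : pred I) (x : I -> V)
  (phi : I -> V -> k) (d : I -> k) (Z U : {vspace V}) :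
  (forall i a u v, phi i (a *: u + v) = a * phi i u + phi i v) ->
  (forall i j, P i -> P j -> phi i (x j) = (i == j)%:R * d j) ->
  (forall i, P i -> d i != 0) ->
  (forall i, P i -> x i \in U) -> (Z <= U)%VS ->
  (forall i z, P i -> z \in Z -> phi i z = 0) ->
  (\dim Z + #|P| <= \dim U)%N.
Proof.
move=> hlin hdual hd hxU hZU hZ.
have phi0 : forall i, phi i 0 = 0.
  by move=> i; have := hlin i (-1) 0 0; rewrite scaler0 addr0 mulN1r addNr.
have phiD : forall i, {morph phi i : u v / u + v >-> u + v}.
  by move=> i u v; have := hlin i 1 u v; rewrite scale1r mul1r.
set T := [tuple x (enum_val j) | j < #|P|].
have Ti : forall j : 'I_#|P|, T`_j = x (enum_val j).
  by move=> j; rewrite -tnth_nth tnth_mktuple.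
have key : forall (c : 'I_#|P| -> k) l,
    phi (enum_val l) (\sum_j c j *: T`_j) = c l * d (enum_val l).
  move=> c l; rewrite (big_morph (phi (enum_val l)) (phiD _) (phi0 _)).
  rewrite (bigD1 l) //= big1 ?addr0.
    rewrite -[c l *: _]addr0 hlin phi0 addr0 Ti (hdual _ _ (enum_valP l) (enum_valP l)).
    by rewrite eqxx mul1r.
  move=> j hj; rewrite -[c j *: _]addr0 hlin phi0 addr0 Ti.
  rewrite (hdual _ _ (enum_valP l) (enum_valP j)).
  by rewrite (inj_eq enum_val_inj) eq_sym (negbTE hj) mul0r mulr0.
have hfree : free T.
  apply/freeP => c hc l; have := key c l; rewrite hc phi0 => /esym /eqP.
  by rewrite mulf_eq0 (negbTE (hd _ (enum_valP l))) orbF => /eqP.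
have hcap : (Z :&: <<T>> = 0)%VS.
  apply/eqP; rewrite -subv0; apply/subvP => v /memv_capP [hvZ hvT].
  rewrite memv0; have hv := coord_span hvT; rewrite hv big1 // => j _.
  have := key (fun j => coord T j v) j; rewrite -hv (hZ _ _ (enum_valP j) hvZ) => /esym /eqP.
  rewrite mulf_eq0 (negbTE (hd _ (enum_valP j))) orbF => /eqP ->; by rewrite scale0r.
have hdimT : \dim <<T>> = #|P| by move: hfree; rewrite /free size_tuple => /eqP.
have hsub : (Z + <<T>> <= U)%VS.
  rewrite subv_add hZU /=; apply/span_subvP => v /tnthP [j ->].
  rewrite tnth_map; apply: hxU; exact: enum_valP.
have := dimvS hsub; have := dimv_sum_cap Z <<T>>%VS; rewrite hcap dimv0 hdimT.
lia.
Qed.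

Lemma lin_sumZ (V : vectType k) (phi : V -> k) (I : finType) (c : I -> k) (u : I -> V) :
  (forall a x y, phi (a *: x + y) = a * phi x + phi y) ->
  phi (\sum_i c i *: u i) = \sum_i c i * phi (u i).
Proof.
move=> hlin.
have phi0 : phi 0 = 0.
  by have := hlin (-1) 0 0; rewrite scaler0 addr0 mulN1r addNr.
have phiD : {morph phi : x y / x + y >-> x + y}.
  by move=> x y; have := hlin 1 x y; rewrite scale1r mul1r.
rewrite (big_morph phi phiD phi0); apply: eq_bigr => i _.
by rewrite -[_ *: _]addr0 hlin phi0 addr0.
Qed.

Lemma dimv_img_add_preim (V : vectType k) (f : 'End(V)) (U S : {vspace V}) :
  (\dim U + \dim S = \dim (f @: U + S) + \dim (U :&: f @^-1: S))%N.
Proof.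
set K := (U :&: f @^-1: S)%VS.
have capE : (f @: U :&: S = f @: K)%VS.
  apply/vspaceP => w; apply/idP/idP.
    case/memv_capP => /memv_imgP [u hu ->] hs.
    by apply: memv_img; rewrite memv_cap hu -memv_preim.
  case/memv_imgP => u; rewrite /K memv_cap -memv_preim => /andP [hu hs] ->.
  by rewrite memv_cap hs memv_img.
have kerE : (K :&: lker f = U :&: lker f)%VS.
  apply/vspaceP => w; rewrite !memv_cap -memv_preim memv_ker.
  by case: (f w == 0) /eqP => [->|]; rewrite ?mem0v ?andbT ?andbF.
have := dimv_sum_cap (f @: U) S; rewrite capE.
have := limg_ker_dim f U; have := limg_ker_dim f K; rewrite kerE.
lia.
Qed.

(* When f stabilises S <= U and S' <= U' and U/S embeds in U'/S', this says that
   the cokernel of f on U/S is no larger than on U'/S': the kernels embed, and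
   kernel and cokernel of an endomorphism have the same dimension. *)
Lemma dimv_coker_le (V : vectType k) (f : 'End(V)) (U S U' S' : {vspace V}) :
  (U <= U')%VS -> (S <= S')%VS -> (S' <= U')%VS -> (f @: S' <= S')%VS ->
  (U :&: S' <= S)%VS ->
  (\dim U + \dim (f @: U' + S') <= \dim U' + \dim (f @: U + S))%N.
Proof.
move=> sUU' sSS' sS'U' fS' USS.
have := dimv_img_add_preim f U S; have := dimv_img_add_preim f U' S'.
set K := (U :&: f @^-1: S)%VS; set K' := (U' :&: f @^-1: S')%VS.
have sKS'K' : (K + S' <= K')%VS.
  rewrite subv_add; apply/andP; split; apply/subvP => x.
    rewrite !memv_cap -!memv_preim => /andP [xU fxS].
    by rewrite (subvP sUU') // (subvP sSS').
  move=> xS'; rewrite memv_cap -memv_preim (subvP sS'U') //=.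
  exact: (subvP fS') _ (memv_img f xS').
have sKS'S : (K :&: S' <= S)%VS.
  apply/subvP => x /memv_capP [/memv_capP [xU _] xS'].
  by apply: (subvP USS); rewrite memv_cap xU.
have := dimv_sum_cap K S'; have := dimvS sKS'K'; have := dimvS sKS'S.
lia.
Qed.

Lemma card_lt_pairs N : #|[pred p : 'I_N * 'I_N | (p.2 < p.1)%N]| = 'C(N, 2).
Proof.
rewrite -sum1_card.
rewrite (eq_bigl (fun p : 'I_N * 'I_N => predT p.1 && (p.2 < p.1)%N)) //.
rewrite -(@pair_big_dep _ _ _ 'I_N 'I_N predT (fun i j : 'I_N => (j < i)%N)
  (fun _ _ => 1%N)) /=.
rewrite -bin2_sum big_mkord; apply: eq_bigr => i _.
rewrite -(big_ord_widen N (fun _ => 1%N) (ltnW (ltn_ord i))).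
by rewrite sum1_card card_ord.
Qed.

End LinearAlgebra.

(** * Linear forms on B and B (x) B *)

Section LinearForms.
Variable k : fieldType.
Variable n : nat.
Notation B := 'rV[k]_n.
Notation W := 'M[k]_(n, n).

(* A column c stands for the linear form u |-> sum_i u_i c_i on B, a pair c, d
   for the bilinear form c (x) d on B (x) B; aug is evaluation at s = 0. *)
Definition form1 (c : 'cV[k]_n) (u : B) : k := (u *m c) 0 0.
Definition form2 (c d : 'cV[k]_n) (P : W) : k := (c^T *m P *m d) 0 0.
Definition aug : 'cV[k]_n := \col_i ((i : nat) == 0%N)%:R.

Lemma form1_lin c a u v : form1 c (a *: u + v) = a * form1 c u + form1 c v.
Proof. by rewrite /form1 mulmxDl -scalemxAl !mxE. Qed.

Lemma form2_lin c d a P Q : form2 c d (a *: P + Q) = a * form2 c d P + form2 c d Q.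
Proof. by rewrite /form2 mulmxDr mulmxDl -scalemxAr -scalemxAl !mxE. Qed.

Lemma form2B c d (P Q : W) : form2 c d (P - Q) = form2 c d P - form2 c d Q.
Proof.
have -> : P - Q = (-1) *: Q + P by rewrite scaleN1r addrC.
by rewrite form2_lin mulN1r addrC.
Qed.

Lemma form20 c d : form2 c d 0 = 0.
Proof. by rewrite /form2 mulmx0 mul0mx mxE. Qed.

Lemma form10 c : form1 c 0 = 0.
Proof. by rewrite /form1 mul0mx mxE. Qed.

Lemma tens_mx (x y : B) : tens x y = x^T *m y.
Proof. by apply/matrixP => i j; rewrite !mxE big_ord1 !mxE. Qed.

Lemma form2_tens c d x y : form2 c d (tens x y) = form1 c x * form1 d y.
Proof.
rewrite /form2 /form1 tens_mx mulmxA -trmx_mul -mulmxA mxE big_ord1 mxE.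
by [].
Qed.

Lemma form1_aug u : form1 aug u = bcoef u 0.
Proof.
rewrite /form1 mxE /bcoef [RHS]big_mkcond /=; apply: eq_bigr => j _; rewrite mxE.
by case: eqP => _; rewrite ?mulr1 ?mulr0.
Qed.

Lemma form1_aug_bmul u v : form1 aug (bmul u v) = form1 aug u * form1 aug v.
Proof.
rewrite !form1_aug bcoef_bmul; case: ltnP => h.
  by rewrite coefM big_ord1 !coef_bpoly.
by rewrite !bcoef_out ?mul0r.
Qed.

Lemma form1_aug_bone : (0 < n)%N -> form1 aug (bone k n) = 1.
Proof. by move=> h; rewrite form1_aug (@bcoef_bone k n 0%N h) coef1. Qed.

Lemma row_spow_sum (u : B) : u = \sum_(a < n) u 0 a *: spow k n a.
Proof.
apply/rowP => i; rewrite summxE (bigD1 i) //= big1 ?addr0.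
  by rewrite !mxE eqxx mulr1.
by move=> j hj; rewrite !mxE; case: eqP => h; [case/eqP: hj; apply: val_inj|rewrite mulr0].
Qed.

Lemma mx_tens_spow_sum (P : W) :
  P = \sum_(a < n) \sum_(b < n) P a b *: tens (spow k n a) (spow k n b).
Proof.
apply/matrixP => i j; rewrite summxE (bigD1 i) //= [X in _ + X]big1 ?addr0.
  rewrite summxE (bigD1 j) //= [X in _ + X]big1 ?addr0.
    by rewrite !mxE !eqxx mulr1 mulr1.
  move=> b hb; rewrite !mxE; case: (eqP (x := (j : nat))) => h; last by rewrite !mulr0.
  by case/eqP: hb; apply: val_inj.
move=> a ha; rewrite summxE big1 // => b _; rewrite !mxE.
case: (eqP (x := (i : nat))) => h; last by rewrite mul0r mulr0.
by case/eqP: ha; apply: val_inj.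
Qed.

Lemma tensA_full (P : W) : P \in tensA (fullv : {vspace B}).
Proof.
rewrite (mx_tens_spow_sum P); apply: memv_suml => a _; apply: memv_suml => b _.
apply: memvZ; apply: prodspace_mem; rewrite ?memvf //.
  by move=> *; rewrite tens_linl.
by move=> *; rewrite tens_linr.
Qed.

Lemma tens_tensA (A : {vspace B}) x y : x \in A -> y \in A -> tens x y \in tensA A.
Proof.
move=> hx hy; apply: prodspace_mem => //.
  by move=> *; rewrite tens_linl.
by move=> *; rewrite tens_linr.
Qed.

Definition aug2 (P : W) := form2 aug aug P.

Lemma aug2_tmult P : aug2 P = form1 aug (tmult P).
Proof.
have := tensA_full P; move: P; apply: prodspace_ind.
- by rewrite /aug2 form20 raddf0 form10.
- by move=> a u v hu hv; rewrite /aug2 form2_lin tmult_lin form1_lin -hu -hv.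
by move=> x y _ _; rewrite /aug2 form2_tens tmult_tens form1_aug_bmul.
Qed.

Section PointDerivations.
Variable A : {vspace B}.

Definition is_pder (l : 'cV[k]_n) := forall f g, f \in A -> g \in A ->
  form1 l (bmul f g) = form1 aug f * form1 l g + form1 aug g * form1 l f.

Lemma form2_tmul l m : is_pder l -> is_pder m -> forall x y, x \in tensA A -> y \in tensA A ->
  form2 l m (tmul x y) = aug2 x * form2 l m y + form2 aug m x * form2 l aug y
     + form2 l aug x * form2 aug m y + aug2 y * form2 l m x.
Proof.
move=> dl dm x y hx hy; move: x hx; apply: prodspace_ind.
- by rewrite tmulC raddf0 /aug2 !form20; ring.
- move=> a u v hu hv; rewrite tmul_linl /aug2 !form2_lin hu hv /aug2; ring.
move=> f g hf hg; move: y hy; apply: prodspace_ind.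
- by rewrite raddf0 /aug2 !form20; ring.
- move=> a u v hu hv; rewrite tmul_linr /aug2 !form2_lin hu hv /aug2; ring.
move=> u v hu hv; rewrite tmul_tens /aug2 !form2_tens dl // dm //; ring.
Qed.

Lemma form2_aug_tmul l : is_pder l -> forall x y, x \in tensA A -> y \in tensA A ->
  form2 l aug (tmul x y) = aug2 x * form2 l aug y + form2 l aug x * aug2 y.
Proof.
move=> dl x y hx hy; move: x hx; apply: prodspace_ind.
- by rewrite tmulC raddf0 /aug2 !form20; ring.
- move=> a u v hu hv; rewrite tmul_linl /aug2 !form2_lin hu hv /aug2; ring.
move=> f g hf hg; move: y hy; apply: prodspace_ind.
- by rewrite raddf0 /aug2 !form20; ring.
- move=> a u v hu hv; rewrite tmul_linr /aug2 !form2_lin hu hv /aug2; ring.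
move=> u v hu hv; rewrite tmul_tens /aug2 !form2_tens dl // !form1_aug_bmul; ring.
Qed.

Lemma form2_aug_add l : is_pder l -> forall x, x \in tensA A ->
  form2 aug l x + form2 l aug x = form1 l (tmult x).
Proof.
move=> dl; apply: prodspace_ind.
- by rewrite !form20 raddf0 form10 addr0.
- move=> a u v hu hv; rewrite !form2_lin tmult_lin form1_lin -hu -hv; ring.
move=> f g hf hg; rewrite !form2_tens tmult_tens dl //; ring.
Qed.

End PointDerivations.
End LinearForms.

(** * The diagonal ideal I_A and its square *)

Section DiagonalIdeals.
Variable k : fieldType.
Variable n : nat.
Notation B := 'rV[k]_n.
Notation W := 'M[k]_(n, n).

Lemma tmul0 (P : W) : tmul 0 P = 0.
Proof. by rewrite tmulC raddf0. Qed.

Lemma diagIP (A : {vspace B}) x : reflect (x \in tensA A /\ tmult x = 0) (x \in diagI A).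
Proof.
rewrite /diagI memv_cap memv_ker lfunE /=; apply: (iffP andP) => [[h /eqP]|[h ->]] //.
Qed.

Lemma tmult_tmul (x y : W) : tmult (tmul x y) = bmul (tmult x) (tmult y).
Proof.
have := tensA_full y; have := tensA_full x; move: x; apply: prodspace_ind.
- by move=> _; rewrite tmul0 raddf0 bmul0l.
- by move=> a u v hu hv hy; rewrite tmul_linl !tmult_lin bmul_linl hu ?hv.
move=> f g _ _ hy; move: y hy; apply: prodspace_ind.
- by rewrite raddf0 raddf0 bmul0r.
- by move=> a u v hu hv; rewrite tmul_linr !tmult_lin bmul_linr hu hv.
move=> u v _ _; rewrite tmul_tens !tmult_tens.
by rewrite !bmulA -[bmul (bmul f u) g]bmulA [bmul u g]bmulC bmulA.
Qed.

Lemma tensA_tmul (A : {vspace B}) : is_subalgebra A ->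
  forall x y, x \in tensA A -> y \in tensA A -> tmul x y \in tensA A.
Proof.
move=> [h1 hm] x y hx hy; move: x hx; apply: prodspace_ind.
- by rewrite tmul0 mem0v.
- by move=> a u v hu hv; rewrite tmul_linl memvD ?memvZ.
move=> f g hf hg; move: y hy; apply: prodspace_ind.
- by rewrite raddf0 mem0v.
- by move=> a u v hu hv; rewrite tmul_linr memvD ?memvZ.
by move=> u v hu hv; rewrite tmul_tens tens_tensA ?hm.
Qed.

Lemma diagI_tmul (A : {vspace B}) : is_subalgebra A ->
  forall x y, x \in diagI A -> y \in tensA A -> tmul x y \in diagI A.
Proof.
move=> hA x y /diagIP [hx hx0] hy; apply/diagIP; split; first exact: tensA_tmul.
by rewrite tmult_tmul hx0 bmul0l.
Qed.

Lemma diagI2_sub_diagI (A : {vspace B}) : is_subalgebra A -> (diagI2 A <= diagI A)%VS.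
Proof.
move=> hA; apply/subvP; apply: prodspace_ind.
- exact: mem0v.
- by move=> a u v hu hv; rewrite memvD ?memvZ.
by move=> u v hu hv; apply: diagI_tmul => //; case/diagIP: hv.
Qed.

Lemma is_subalgebra_full : is_subalgebra (fullv : {vspace B}).
Proof. by split=> *; rewrite memvf. Qed.

Lemma diagI_full x : (x \in diagI (fullv : {vspace B})) = (tmult x == 0).
Proof.
by apply/diagIP/eqP => [[]|h] //; split => //; exact: tensA_full.
Qed.

Lemma diagI_sub_full (A : {vspace B}) : (diagI A <= diagI fullv)%VS.
Proof. by apply/subvP => x /diagIP [_ h]; rewrite diagI_full h. Qed.

Lemma tmul_diagI2 (A : {vspace B}) u v : u \in diagI A -> v \in diagI A ->
  tmul u v \in diagI2 A.
Proof.
move=> hu hv; apply: prodspace_mem => //.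
  by move=> *; rewrite tmul_linl.
by move=> *; rewrite tmul_linr.
Qed.

Lemma diagI2_sub_full (A : {vspace B}) : (diagI2 A <= diagI2 fullv)%VS.
Proof.
apply/subvP; apply: prodspace_ind.
- exact: mem0v.
- by move=> a u v hu hv; rewrite memvD ?memvZ.
move=> u v hu hv; apply: tmul_diagI2; exact: (subvP (diagI_sub_full A)).
Qed.

Definition tmulf (T0 : W) : 'End(W) := linfun (tmul T0).

Lemma tmulfE T0 x : tmulf T0 x = tmul T0 x.
Proof. by rewrite /tmulf lfunE. Qed.

Lemma tmulf_diagI2_full T0 : (tmulf T0 @: diagI2 fullv <= diagI2 fullv)%VS.
Proof.
apply/subvP => w /memv_imgP [x hx ->]; rewrite tmulfE; move: x hx; apply: prodspace_ind.
- by rewrite raddf0 mem0v.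
- by move=> a u v hu hv; rewrite tmul_linr memvD ?memvZ.
move=> u v hu hv; rewrite tmulA; apply: tmul_diagI2 => //.
by rewrite tmulC; apply: diagI_tmul => //; [exact: is_subalgebra_full | exact: tensA_full].
Qed.

Lemma tmulf_diagI (A : {vspace B}) T0 : is_subalgebra A -> T0 \in tensA A ->
  (tmulf T0 @: diagI A <= diagI A)%VS.
Proof.
move=> hA hT; apply/subvP => w /memv_imgP [x hx ->]; rewrite tmulfE tmulC.
by apply: diagI_tmul.
Qed.

End DiagonalIdeals.

(** * The cokernel of t on Omega_B *)

Section CokernelB.
Variable k : fieldType.
Variable n : nat.
Notation B := 'rV[k]_n.
Notation W := 'M[k]_(n, n).
Notation bo := (bone k n).
Notation sp := (spow k n).

(* In I/I^2 these are x dy and dz. *)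
Definition mul_dif (x y : B) : W := tens (bmul x y) bo - tens x y.
Definition dif (z : B) : W := tens z bo - tens bo z.

Lemma mul_dif_linl a x x' y : mul_dif (a *: x + x') y = a *: mul_dif x y + mul_dif x' y.
Proof. rewrite /mul_dif bmul_linl !tens_linl; apply/matrixP => i j; rewrite !mxE; ring. Qed.

Lemma mul_dif_linr a x y y' : mul_dif x (a *: y + y') = a *: mul_dif x y + mul_dif x y'.
Proof.
rewrite /mul_dif bmul_linr tens_linl tens_linr.
by apply/matrixP => i j; rewrite !mxE; ring.
Qed.

Lemma mul_dif_diagI_full x y : mul_dif x y \in diagI (fullv : {vspace B}).
Proof. by rewrite diagI_full /mul_dif raddfB /= !tmult_tens bmul1r subrr. Qed.

Lemma dif_diagI_full z : dif z \in diagI (fullv : {vspace B}).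
Proof. by rewrite diagI_full /dif raddfB /= !tmult_tens bmul1r bmul1l subrr. Qed.

Lemma mul_dif_bmul x y z :
  mul_dif x (bmul y z) =
    mul_dif (bmul x y) z + mul_dif (bmul x z) y - tmul (mul_dif x y) (dif z).
Proof.
rewrite /mul_dif /dif !tmulBl !tmulBr !tmul_tens !bmul1l !bmul1r.
have e1 : bmul (bmul x z) y = bmul (bmul x y) z by rewrite -!bmulA [bmul z y]bmulC.
rewrite e1 bmulA; apply/matrixP => i j; rewrite !mxE; ring.
Qed.

Lemma mul_dif_tens t w y : mul_dif (bmul t w) y = tmul (tens t bo) (mul_dif w y).
Proof.
by rewrite /mul_dif tmulBr !tmul_tens ?bmul1l ?bmul1r bmulA.
Qed.

Variable t : B.
Variable e : nat.
Hypothesis ht0 : forall i, (i < e)%N -> bcoef t i = 0.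
Hypothesis hte : bcoef t e != 0.

Definition low_tB_span : {vspace B} :=
  (<<[seq sp l | l <- iota 0 e]>> + <<[seq bmul t (sp l) | l <- iota 0 n]>>)%VS.

Lemma bcoef_t_spow m i : bcoef (bmul t (sp m)) i =
  if (i < n)%N then (if (i < m)%N then 0 else bcoef t (i - m)) else 0.
Proof. by rewrite bmulC bmul_spowl bcoef_btrunc coefXnM coef_bpoly. Qed.

Lemma low_tB_span_full x : x \in low_tB_span.
Proof.
(* Descending induction on the s-adic order of x: an element of order j < n is
   s^j if j < e, and a scalar multiple of t s^(j-e) otherwise. *)
suff H : forall d x, (forall i, (i < n - d)%N -> bcoef x i = 0) -> x \in low_tB_span.
  by apply: (H n) => i; rewrite subnn.
elim=> [|d IH] {}x hx.
  have -> : x = 0.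
    apply: bcoefP => i; rewrite bcoef0; case: (ltnP i n) => h; first by apply: hx; lia.
    by rewrite bcoef_out.
  exact: mem0v.
case: (leqP n d) => hnd.
  by apply: IH => i hi; apply: hx; lia.
set j := (n - d.+1)%N.
have hj : (j < n)%N by lia.
pose g := if (j < e)%N then sp j else (bcoef t e)^-1 *: bmul t (sp (j - e)).
have hg : g \in low_tB_span.
  rewrite /g; case: ltnP => hje.
    apply: (subvP (addvSl _ _)); apply: memv_span; apply: map_f; rewrite mem_iota; lia.
  apply: memvZ; apply: (subvP (addvSr _ _)); apply: memv_span; apply: map_f.
  rewrite mem_iota; lia.
have hgj : bcoef g j = 1.
  rewrite /g; case: ltnP => hje; first by rewrite bcoef_spow_lt // eqxx.
  rewrite -[_ *: _]addr0 bcoef_lin bcoef0 addr0 bcoef_t_spow hj ifF; last by apply/negbTE; lia.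
  have -> : (j - (j - e) = e)%N by lia.
  by rewrite mulVf.
have hgi : forall i, (i < j)%N -> bcoef g i = 0.
  move=> i hi; rewrite /g; case: ltnP => hje.
    by rewrite bcoef_spow_lt; [case: eqP => //; lia | lia].
  rewrite -[_ *: _]addr0 bcoef_lin bcoef0 addr0 bcoef_t_spow ifT; last by lia.
  case: ifP => h; first by rewrite mulr0.
  by rewrite (ht0 (i := (i - (j - e))%N)) ?mulr0 //; move/negbT: h; lia.
have hx' : x - bcoef x j *: g \in low_tB_span.
  apply: IH => i hi.
  have -> : x - bcoef x j *: g = (- bcoef x j) *: g + x by rewrite addrC scaleNr.
  rewrite bcoef_lin; case: (ltnP i j) => hij.
    by rewrite (hgi i hij) (hx i) ?mulr0 ?add0r //; lia.
  have -> : i = j by lia.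
  by rewrite hgj mulr1 addNr.
by have := memvD hx' (memvZ (bcoef x j) hg); rewrite subrK.
Qed.

Let T0 := tens t bo.
Let L := tmulf T0.
Let IB := diagI (fullv : {vspace B}).
Let IB2 := diagI2 (fullv : {vspace B}).
Let E := <<[seq mul_dif (sp l) (sp 1) | l <- iota 0 e]>>%VS.
Let Z := (E + (L @: IB + IB2))%VS.

Lemma mul_dif0l y : mul_dif 0 y = 0.
Proof. by have := mul_dif_linl (-1) 0 0 y; rewrite scaler0 addr0 scaleN1r addNr. Qed.

Lemma mul_dif0r x : mul_dif x 0 = 0.
Proof. by have := mul_dif_linr (-1) x 0 0; rewrite scaler0 addr0 scaleN1r addNr. Qed.

Lemma mul_dif_s_Z x : mul_dif x (sp 1) \in Z.
Proof.
have /memv_addP [x1 hx1 [x2 hx2 ->]] := low_tB_span_full x.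
have -> : x1 + x2 = 1 *: x1 + x2 by rewrite scale1r.
rewrite mul_dif_linl scale1r; apply: memvD.
- move: x1 hx1; apply: span_ind.
  + by rewrite mul_dif0l mem0v.
  + by move=> a u v hu hv; rewrite mul_dif_linl memvD ?memvZ.
  + move=> v /mapP [l hl ->]; apply: (subvP (addvSl _ _)); apply: memv_span.
    exact: map_f.
- move: x2 hx2; apply: span_ind.
  + by rewrite mul_dif0l mem0v.
  + by move=> a u v hu hv; rewrite mul_dif_linl memvD ?memvZ.
  + move=> v /mapP [l hl ->]; rewrite mul_dif_tens; apply: (subvP (addvSr _ _)).
    apply: (subvP (addvSl _ _)).
    have := memv_img L (mul_dif_diagI_full (sp l) (sp 1)); by rewrite /L tmulfE.
Qed.

Lemma mul_dif_spow_Z b x : mul_dif x (sp b) \in Z.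
Proof.
elim: b x => [|b IH] x.
  have -> : sp 0 = bo by [].
  by rewrite /mul_dif bmul1r subrr mem0v.
have -> : sp b.+1 = bmul (sp b) (sp 1) by rewrite spowD addn1.
rewrite mul_dif_bmul; apply: memvB; first by apply: memvD; [exact: mul_dif_s_Z | exact: IH].
apply: (subvP (addvSr _ _)); apply: (subvP (addvSr _ _)).
by apply: tmul_diagI2; [exact: mul_dif_diagI_full | exact: dif_diagI_full].
Qed.

Lemma mul_dif_Z x y : mul_dif x y \in Z.
Proof.
rewrite (row_spow_sum y); apply: (big_ind (fun v => mul_dif x v \in Z)).
- by rewrite mul_dif0r mem0v.
- by move=> u v hu hv; have := mul_dif_linr 1 x u v; rewrite !scale1r => ->; exact: memvD.
move=> a _; have := mul_dif_linr (y 0 a) x (sp a) 0; rewrite !addr0 mul_dif0r addr0 => ->.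
exact: memvZ (mul_dif_spow_Z _ _).
Qed.

Lemma sub_tens_tmult_Z P : P - tens (tmult P) bo \in Z.
Proof.
have := tensA_full P; move: P; apply: prodspace_ind.
- by rewrite raddf0 tens0l subrr mem0v.
- move=> a u v hu hv; rewrite tmult_lin tens_linl.
  have -> : a *: u + v - (a *: tens (tmult u) bo + tens (tmult v) bo) =
    a *: (u - tens (tmult u) bo) + (v - tens (tmult v) bo).
    by rewrite scalerBr opprD addrACA.
  by rewrite memvD ?memvZ.
move=> f g _ _; rewrite tmult_tens.
have -> : tens f g - tens (bmul f g) bo = - mul_dif f g by rewrite /mul_dif opprB.
by rewrite memvN mul_dif_Z.
Qed.

Lemma diagI_full_sub_Z : (IB <= Z)%VS.
Proof.
apply/subvP => x; rewrite /IB diagI_full => /eqP h.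
by have := sub_tens_tmult_Z x; rewrite h tens0l subr0.
Qed.

Lemma dim_diagI_full_le : (\dim (diagI (fullv : {vspace B})) <=
  e + \dim (tmulf (tens t bo) @: diagI fullv + diagI2 fullv))%N.
Proof.
have h1 := dimvS diagI_full_sub_Z.
have h2 := (dimv_add_leqif E (L @: IB + IB2)%VS).1.
have h3 : (\dim E <= e)%N.
  by rewrite (leq_trans (dim_span _)) // size_map size_iota.
apply: (leq_trans h1); apply: (leq_trans h2); by rewrite leq_add2r.
Qed.

End CokernelB.

(** * The cokernel of t on Omega_A *)

Section CokernelA.
Variable k : fieldType.
Variable n : nat.
Hypothesis hn : (0 < n)%N.
Notation B := 'rV[k]_n.
Notation W := 'M[k]_(n, n).
Notation bo := (bone k n).
Notation sp := (spow k n).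

Lemma bcoef_bone0 : bcoef bo 0 = 1.
Proof. by rewrite bcoef_bone // coef1. Qed.

Lemma bcoef0_maxB x : x \in maxB k n -> bcoef x 0 = 0.
Proof.
rewrite /maxB; move: x; apply: span_ind.
- exact: bcoef0.
- by move=> a u v hu hv; rewrite bcoef_lin hu hv mulr0 addr0.
move=> y /mapP [i]; rewrite mem_iota => /andP [h1 _] ->.
rewrite bcoef_spow_lt //; by case: eqP => //; lia.
Qed.

Lemma maxB_of_bcoef0 x : bcoef x 0 = 0 -> x \in maxB k n.
Proof.
move=> h; rewrite (row_spow_sum x); apply: memv_suml => a _.
case: (posnP a) => ha.
  by rewrite -bcoef_ord ha h scale0r mem0v.
apply: memvZ; apply: memv_span; apply: map_f; rewrite mem_iota; have := ltn_ord a; lia.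
Qed.

Variable A : {vspace B}.
Hypothesis hA : is_subalgebra A.

Lemma maxAP x : reflect (x \in A /\ bcoef x 0 = 0) (x \in maxA A).
Proof.
rewrite /maxA memv_cap; apply: (iffP andP) => [[h1 h2]|[h1 h2]]; split => //.
  exact: bcoef0_maxB.
exact: maxB_of_bcoef0.
Qed.

Lemma maxA2_sub : (maxA2 A <= maxA A)%VS.
Proof.
apply/subvP; apply: prodspace_ind.
- exact: mem0v.
- by move=> a u v hu hv; rewrite memvD ?memvZ.
move=> x y /maxAP [hx hx0] /maxAP [hy hy0]; apply/maxAP; split.
  by apply: hA.2.
by rewrite -form1_aug form1_aug_bmul !form1_aug hx0 mul0r.
Qed.

Lemma sub_const_maxA f : f \in A -> f - bcoef f 0 *: bo \in maxA A.
Proof.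
move=> hf; apply/maxAP; split; first by rewrite memvB ?memvZ //; case: hA.
by rewrite -scaleNr bcoefD bcoefZ bcoef_bone0 mulr1 subrr.
Qed.

Variable t : B.
Hypothesis ht : t \in maxA A.

Let X := (maxA2 A + <[bo]> + <[t]>)%VS.
Let C := (maxA A :\: X)%VS.

Lemma dim_maxA_le : (\dim (maxA A) <= \dim C + \dim (maxA2 A) + 1)%N.
Proof.
have e1 := dimv_cap_compl (maxA A) X.
have s : (maxA A :&: X <= maxA2 A + <[t]>)%VS.
  apply/subvP => z /memv_capP [hzM hzX].
  move: hzX => /memv_addP [z12 /memv_addP [z1 hz1 [z2 hz2 e12]] [z3 hz3 ez]].
  case/vlineP: hz2 => a e2; case/vlineP: hz3 => b e3.
  subst.
  have : bcoef (z1 + a *: bo + b *: t) 0 = 0 by case/maxAP: hzM.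
  rewrite !bcoefD !bcoefZ bcoef_bone0.
  have -> : bcoef z1 0 = 0 by case/maxAP: (subvP maxA2_sub _ hz1).
  have -> : bcoef t 0 = 0 by case/maxAP: ht.
  rewrite mulr1 mulr0 addr0 add0r => ->.
  by rewrite scale0r addr0; apply: memv_add => //; rewrite memvZ // memv_line.
have h1 := dimvS s.
have h2 := (dimv_add_leqif (maxA2 A) <[t]>).1.
have h3 : (\dim <[t]> <= 1)%N by rewrite dim_vline; case: (t != 0).
have h4 : (\dim (maxA A :&: X) <= \dim (maxA2 A) + 1)%N.
  apply: (leq_trans h1); apply: (leq_trans h2); by rewrite leq_add2l.
move: e1 h4; rewrite /C; clear; lia.
Qed.

Let pi := daddv_pi C X.
Let bC := vbasis C.
Let r := \dim C.

Lemma capv_C_X : (C :&: X = 0)%VS.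
Proof. exact: capv_diff. Qed.

Lemma pi_X z : z \in X -> pi z = 0.
Proof.
move=> hz.
have hXC : (X :&: C = 0)%VS by rewrite capvC capv_C_X.
have := daddv_pi_add capv_C_X (memv_add (mem0v C) hz); rewrite add0r.
by rewrite (daddv_pi_id hXC hz) => /(congr1 (fun w => w - z)); rewrite addrK subrr.
Qed.

Lemma pi_C z : z \in C -> pi z = z.
Proof. exact: daddv_pi_id capv_C_X. Qed.

(* The coordinates of the basis av of C, extended by zero on X; restricted to A
   they are point derivations. *)
Definition lam (i : nat) (v : B) : k :=
  \sum_(l < \dim C | (l : nat) == i) coord bC l (pi v).

Lemma lam_lin i a u v : lam i (a *: u + v) = a * lam i u + lam i v.
Proof.
rewrite /lam big_distrr -big_split /=; apply: eq_bigr => l _.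
by rewrite !linearP.
Qed.

Definition lamc (i : nat) : 'cV[k]_n := \col_(a < n) lam i (sp a).

Lemma form1_lamc i v : form1 (lamc i) v = lam i v.
Proof.
rewrite {2}(row_spow_sum v) (lin_sumZ _ _ (lam_lin i)) /form1 mxE.
by apply: eq_bigr => a _; rewrite mxE.
Qed.

Lemma form1_lamc_X i z : z \in X -> form1 (lamc i) z = 0.
Proof.
move=> hz; rewrite form1_lamc /lam pi_X // big1 // => l _; exact: linear0.
Qed.

Definition av (j : nat) : B := bC`_j.

Lemma av_C j : av j \in C.
Proof.
rewrite /av; case: (ltnP j (size bC)) => h.
  apply: vbasis_mem; exact: mem_nth.
by rewrite nth_default // mem0v.
Qed.

Lemma av_maxA j : av j \in maxA A.
Proof. exact: (subvP (diffvSl _ _) _ (av_C j)). Qed.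

Lemma form1_lamc_av i j : (i < r)%N -> (j < r)%N -> form1 (lamc i) (av j) = (i == j)%:R.
Proof.
move=> hi hj; rewrite form1_lamc /lam pi_C ?av_C //.
rewrite (big_pred1 (Ordinal hi)); last by [].
have := coord_free (Ordinal hj) (Ordinal hi) (basis_free (vbasisP C)).
rewrite /av /= => ->; by rewrite eq_sym.
Qed.

Lemma bone_X : bo \in X.
Proof.
by rewrite /X; apply: (subvP (addvSl _ _)); apply: (subvP (addvSr _ _)); exact: memv_line.
Qed.
Lemma t_X : t \in X.
Proof. by rewrite /X; apply: (subvP (addvSr _ _)); exact: memv_line. Qed.
Lemma maxA2_X z : z \in maxA2 A -> z \in X.
Proof. by move=> hz; rewrite /X; apply: (subvP (addvSl _ _)); apply: (subvP (addvSl _ _)). Qed.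

Lemma bone_A : bo \in A.
Proof. by case: hA. Qed.

Lemma bmul_maxA2 f g : f \in maxA A -> g \in maxA A -> bmul f g \in maxA2 A.
Proof.
move=> hf hg; apply: prodspace_mem => //.
  by move=> *; rewrite bmul_linl.
by move=> *; rewrite bmul_linr.
Qed.

Lemma lamc_pder i : is_pder A (lamc i).
Proof.
move=> f g fA gA.
have lamc_shift h : form1 (lamc i) (h - bcoef h 0 *: bo) = form1 (lamc i) h.
  by rewrite -scaleNr addrC form1_lin (form1_lamc_X i bone_X) mulr0 add0r.
have fgE : bmul f g = bmul (bcoef f 0 *: bo + (f - bcoef f 0 *: bo))
                           (bcoef g 0 *: bo + (g - bcoef g 0 *: bo)).
  by rewrite ![_ *: bo + _]addrC !subrK.
have fg'M2 := bmul_maxA2 (sub_const_maxA fA) (sub_const_maxA gA).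
rewrite fgE bmul_linl bmul1l bmul_linr bmul1r !form1_lin.
rewrite (form1_lamc_X i (maxA2_X fg'M2)) (form1_lamc_X i bone_X) !lamc_shift !form1_aug.
by rewrite mulr0 addr0 add0r.
Qed.

Let IA := diagI A.
Let IA2 := diagI2 A.
Let T0 := tens t bo.

Lemma t_A : t \in A.
Proof. by case/maxAP: ht. Qed.
Lemma bcoef_t0 : bcoef t 0 = 0.
Proof. by case/maxAP: ht. Qed.

Lemma T0_A : T0 \in tensA A.
Proof. by apply: tens_tensA; [exact: t_A | exact: bone_A]. Qed.

Lemma aug2_diagI u : u \in IA -> aug2 u = 0.
Proof. by case/diagIP => _ h; rewrite aug2_tmult h form10. Qed.

Lemma form2_aug_antisym l u : is_pder A l -> u \in IA ->
  form2 (aug k n) l u = - form2 l (aug k n) u.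
Proof.
move=> dl /diagIP [hu h]; have := form2_aug_add dl hu; rewrite h form10 => /eqP.
by rewrite addr_eq0 => /eqP.
Qed.

Lemma form2_skew_diagI2 l m u v : is_pder A l -> is_pder A m -> u \in IA -> v \in IA ->
  form2 l m (tmul u v) - form2 m l (tmul u v) = 0.
Proof.
move=> dl dm hu hv; have hu' : u \in tensA A by case/diagIP: hu.
have hv' : v \in tensA A by case/diagIP: hv.
rewrite (form2_tmul dl dm hu' hv') (form2_tmul dm dl hu' hv') !aug2_diagI //.
by rewrite !(form2_aug_antisym dl) // !(form2_aug_antisym dm) //; ring.
Qed.

Lemma form2_aug_diagI2 l u v : is_pder A l -> u \in IA -> v \in IA ->
  form2 l (aug k n) (tmul u v) = 0.
Proof.
move=> dl hu hv; have hu' : u \in tensA A by case/diagIP: hu.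
have hv' : v \in tensA A by case/diagIP: hv.
by rewrite (form2_aug_tmul dl hu' hv') !aug2_diagI // mul0r mulr0 addr0.
Qed.

Lemma form2_T0 l : form1 l t = 0 -> aug2 T0 = 0 /\ form2 l (aug k n) T0 = 0.
Proof.
move=> hl; rewrite /aug2 /T0 !form2_tens form1_aug bcoef_t0 hl !mul0r; by split.
Qed.

Lemma form2_T0_tmul l m x : is_pder A l -> is_pder A m -> form1 l t = 0 -> x \in IA ->
  form2 l m (tmul T0 x) = 0.
Proof.
move=> dl dm hl hx; have hx' : x \in tensA A by case/diagIP: hx.
have [h1 h2] := form2_T0 hl.
rewrite (form2_tmul dl dm T0_A hx') h1 h2 (aug2_diagI hx) /T0 form2_tens form1_aug bcoef_t0.
ring.
Qed.

Lemma form2_aug_T0_tmul l x : is_pder A l -> form1 l t = 0 -> x \in IA ->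
  form2 l (aug k n) (tmul T0 x) = 0.
Proof.
move=> dl hl hx; have hx' : x \in tensA A by case/diagIP: hx.
have [h1 h2] := form2_T0 hl.
by rewrite (form2_aug_tmul dl T0_A hx') h1 h2 (aug2_diagI hx) mul0r mulr0 addr0.
Qed.

Lemma dif_diagI g : g \in A -> dif g \in IA.
Proof.
move=> hg; apply/diagIP; split.
  by rewrite /dif memvB // tens_tensA // bone_A.
by rewrite /dif raddfB /= !tmult_tens bmul1l bmul1r subrr.
Qed.

Lemma mul_dif_diagI f g : f \in A -> g \in A -> mul_dif f g \in IA.
Proof.
move=> hf hg; apply/diagIP; split.
  by rewrite /mul_dif memvB // tens_tensA // ?bone_A //; apply: hA.2.
by rewrite /mul_dif raddfB /= !tmult_tens bmul1r subrr.
Qed.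

Lemma form1_lamc_t i : form1 (lamc i) t = 0.
Proof. exact: form1_lamc_X t_X. Qed.

Lemma av_A j : av j \in A.
Proof. by case/maxAP: (av_maxA j). Qed.

(* (r, j) indexes the class of d a_j and (i, j), j < i < r, that of a_j d a_i. *)
Definition Pair := ('I_r.+1 * 'I_r.+1)%type.
Definition lt_pair := [pred p : Pair | (p.2 < p.1)%N].
Definition omega_gen (p : Pair) : W :=
  if (p.1 : nat) == r then dif (av p.2) else mul_dif (av p.2) (av p.1).
Definition omega_coform (p : Pair) (P : W) : k :=
  if (p.1 : nat) == r then form2 (lamc p.2) (aug k n) P
  else form2 (lamc p.2) (lamc p.1) P - form2 (lamc p.1) (lamc p.2) P.
Definition omega_coform_diag (p : Pair) : k := if (p.1 : nat) == r then 1 else -1.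

Lemma omega_coform_lin p a u v :
  omega_coform p (a *: u + v) = a * omega_coform p u + omega_coform p v.
Proof. rewrite /omega_coform; case: ifP => _; rewrite !form2_lin; ring. Qed.

Lemma form1_lamc_bone i : form1 (lamc i) bo = 0.
Proof. exact: form1_lamc_X bone_X. Qed.
Lemma form1_aug_av j : form1 (aug k n) (av j) = 0.
Proof. by rewrite form1_aug; case/maxAP: (av_maxA j). Qed.
Lemma form1_lamc_bmul i a b : form1 (lamc i) (bmul (av a) (av b)) = 0.
Proof. exact: form1_lamc_X (maxA2_X (bmul_maxA2 (av_maxA a) (av_maxA b))). Qed.

Lemma omega_coform_dual p q : lt_pair p -> lt_pair q ->
  omega_coform p (omega_gen q) = (p == q)%:R * omega_coform_diag q.
Proof.
case: p => p1 p2; case: q => q1 q2; rewrite /lt_pair /= => hp hq.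
have hp1 := ltn_ord p1; have hq1 := ltn_ord q1.
rewrite /omega_coform /omega_gen /omega_coform_diag /= xpair_eqE -!val_eqE /=.
case: (eqVneq (p1 : nat) r) => hp1r; case: (eqVneq (q1 : nat) r) => hq1r.
- rewrite /dif form2B !form2_tens form1_lamc_bone form1_aug_bone //.
  rewrite (form1_lamc_av (i := p2)) ?(form1_lamc_av (i := p2)); try lia.
  rewrite hp1r hq1r eqxx /=; ring.
- rewrite /mul_dif form2B !form2_tens form1_lamc_bmul form1_aug_av.
  rewrite hp1r (_ : (r == q1) = false); last by apply/negbTE; rewrite eq_sym.
  rewrite /=; ring.
- rewrite /dif !form2B !form2_tens !form1_lamc_bone hq1r.
  rewrite (_ : ((p1 : nat) == r) = false); last exact/negbTE.
  rewrite /=; ring.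
rewrite /mul_dif !form2B !form2_tens !form1_lamc_bmul.
rewrite (form1_lamc_av (i := p2)); try lia.
rewrite (form1_lamc_av (i := p1)); try lia.
rewrite (form1_lamc_av (i := p1)); try lia.
rewrite (form1_lamc_av (i := p2)); try lia.
have -> : (((p1 : nat) == q2)%:R * ((p2 : nat) == q1)%:R : k) = 0.
  case: eqP => h1; case: eqP => h2 //=; rewrite ?mul0r ?mulr0 //; lia.
case: eqP => h1; case: eqP => h2 /=; ring.
Qed.

Lemma dim_diagI_ge : (\dim (tmulf T0 @: IA + IA2) + 'C(r.+1, 2) <= \dim IA)%N.
Proof.
rewrite -card_lt_pairs.
apply: (@dim_add_dual_family _ _ Pair lt_pair omega_gen omega_coform omega_coform_diag).
- exact: omega_coform_lin.
- exact: omega_coform_dual.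
- by move=> p _; rewrite /omega_coform_diag; case: ifP => _; rewrite ?oppr_eq0 oner_neq0.
- move=> [j i] /= _; rewrite /omega_gen /=; case: ifP => _.
    by apply: dif_diagI; exact: av_A.
  by apply: mul_dif_diagI; exact: av_A.
- by rewrite subv_add tmulf_diagI ?T0_A // diagI2_sub_diagI.
move=> [j i] z /= hp /memv_addP [z1 /memv_imgP [x hx ->] [z2 hz2 ->]].
have -> : tmulf T0 x + z2 = 1 *: tmulf T0 x + z2 by rewrite scale1r.
rewrite omega_coform_lin tmulfE mul1r.
have -> : omega_coform (j, i) (tmul T0 x) = 0.
  rewrite /omega_coform /=; case: ifP => _.
    by apply: form2_aug_T0_tmul => //; [exact: lamc_pder | exact: form1_lamc_t].
  by rewrite !form2_T0_tmul ?subrr //; try exact: lamc_pder; exact: form1_lamc_t.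
rewrite add0r; move: z2 hz2; apply: prodspace_ind.
- by rewrite /omega_coform; case: ifP => _; rewrite ?form20 ?subrr.
- by move=> a u v hu hv; rewrite omega_coform_lin hu hv mulr0 addr0.
move=> u v hu hv; rewrite /omega_coform; case: ifP => _.
  by apply: form2_aug_diagI2 => //; exact: lamc_pder.
by apply: form2_skew_diagI2 => //; exact: lamc_pder.
Qed.

Lemma dim_diagI_cotdim : (\dim (tmulf T0 @: IA + IA2) + 'C(cotdim A, 2) <= \dim IA)%N.
Proof.
have le_cotdim : (cotdim A <= r.+1)%N by have := dim_maxA_le; rewrite /cotdim /r; lia.
by apply: leq_trans dim_diagI_ge; rewrite leq_add2l leq_bin2l.
Qed.

End CokernelA.

Lemma exists_exact_order (k : fieldType) (n e : nat) (M : {vspace 'rV[k]_n}) :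
  (forall a, a \in M -> in_spowB e a) -> ~ (forall a, a \in M -> in_spowB e.+1 a) ->
  exists t, [/\ t \in M, forall i, (i < e)%N -> bcoef t i = 0 & bcoef t e != 0].
Proof.
move=> he hNe1; have [t tM tNe1] : exists2 t, t \in M & ~ in_spowB e.+1 t.
  apply: NNPP => hno; apply: hNe1 => a aM; apply: NNPP => aN; apply: hno; by exists a.
have t_low : forall i, (i < e)%N -> bcoef t i = 0 by apply/in_spowBP; exact: he.
exists t; split=> //; apply/eqP => te0; apply: tNe1; apply/in_spowBP => i.
by rewrite ltnS leq_eqVlt => /orP [/eqP -> | /t_low].
Qed.

Unset Implicit Arguments. Set Strict Implicit. Set Printing Implicit Defensive.

Theorem proposition2p14 (k : fieldType) (hk : perfect_field k) (n : nat) (hn : (0 < n)%N)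
  (A : {vspace 'rV[k]_n}) (hA : is_subalgebra A) (e : nat) (he1 : (1 <= e)%N)
  (heM : forall a, a \in maxA A -> in_spowB e a)
  (hemax : ~ (forall a, a \in maxA A -> in_spowB e.+1 a))
  (hlt : (e < 'C(cotdim A, 2))%N) :
  Omega_map_ker_nonzero A.
Proof.
apply: NNPP => no_ker.
have Omega_inj : (diagI A :&: diagI2 fullv <= diagI2 A)%VS.
  apply/subvP => x /memv_capP [xI xI2B]; apply/negPn/negP => xNI2.
  by apply: no_ker; exists x.
have [t [tM t_low t_e]] := exists_exact_order heM hemax.
have := dimv_coker_le (f := tmulf (tens t (bone k n))) (diagI_sub_full A)
  (diagI2_sub_full A) (diagI2_sub_diagI (is_subalgebra_full k n))
  (tmulf_diagI2_full _) Omega_inj.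
have := dim_diagI_full_le t_low t_e.
have := dim_diagI_cotdim hn hA tM.
(* The dimensions above see the vector type of 'M_n partly through HB's
   reverse coercion; unfold it so that lia identifies them. *)
rewrite /reverse_coercion; lia.
Qed.
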